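(* Let $\tau:\mathbb{F}_p((t))^d\to\mathbb{F}_p((t))^d$, $(f_1,\dots,f_d)\mapsto(tf_1,\dots,tf_d)$, and let $V$ be a compact open subgroup of $\mathbb{F}_p((t))^d$ such that $\tau(V)$ is a proper subgroup of $V$. Then there is an automorphism $\theta$ of the topological group $\mathbb{F}_p((t))^d$ such that $\theta\circ\tau=\tau\circ\theta$ and $\theta(\mathbb{F}_p[[t]]^d)=V$.
   Context: $\mathbb{F}_p((t))$ is the additive group of formal Laurent series over $\mathbb{F}_p$ with its usual locally compact topology, $\mathbb{F}_p[[t]]$ the compact open subgroup of power series; $\mathbb{F}_p((t))^d$ has the product topology. Automorphisms are of the additive topological group, not necessarily $\mathbb{F}_p((t))$-linear. *)

From Stdlib Require List.
From mathcomp Require Import all_boot all_order all_algebra.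
Set Implicit Arguments. Unset Strict Implicit. Unset Printing Implicit Defensive.
Import Order.TTheory GRing.Theory Num.Theory.
Local Open Scope ring_scope.

(* A formal Laurent series over F_p: coefficient function int -> 'F_p
   vanishing below some index. *)
Definition laurent_pred (p : nat) (a : int -> 'F_p) : Prop :=
  exists N : int, forall n : int, n < N -> a n = 0.

Definition LS (p : nat) := {a : int -> 'F_p | laurent_pred a}.

Definition coef (p : nat) (a : LS p) : int -> 'F_p := proj1_sig a.

Lemma laurent0 (p : nat) : laurent_pred (fun _ : int => (0 : 'F_p)).
Proof. by exists 0. Qed.

Lemma laurentD (p : nat) (a b : LS p) :
  laurent_pred (fun n => coef a n + coef b n).
Proof.
case: a => a [Na Ha]; case: b => b [Nb Hb]; exists (Num.min Na Nb) => n /=.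
by rewrite lt_min => /andP[/Ha -> /Hb ->]; rewrite addr0.
Qed.

Lemma laurentN (p : nat) (a : LS p) : laurent_pred (fun n => - coef a n).
Proof. by case: a => a [Na Ha]; exists Na => n /= /Ha ->; rewrite oppr0. Qed.

Lemma laurentT (p : nat) (a : LS p) : laurent_pred (fun n => coef a (n - 1)).
Proof.
case: a => a [Na Ha]; exists (Na + 1) => n /= hn; apply: Ha.
by rewrite ltrBlDr.
Qed.

Definition ls0 (p : nat) : LS p := exist _ _ (laurent0 p).
Definition lsadd (p : nat) (a b : LS p) : LS p := exist _ _ (laurentD a b).
Definition lsopp (p : nat) (a : LS p) : LS p := exist _ _ (laurentN a).
(* multiplication by t : coefficient of t^n in t*f is coefficient of t^(n-1) in f *)
Definition lsmulT (p : nat) (a : LS p) : LS p := exist _ _ (laurentT a).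

Definition LSd (p d : nat) := 'I_d -> LS p.
Definition vset (p d : nat) := LSd p d -> Prop.

Definition vzero (p d : nat) : LSd p d := fun _ => ls0 p.
Definition vadd (p d : nat) (x y : LSd p d) : LSd p d := fun i => lsadd (x i) (y i).
Definition vopp (p d : nat) (x : LSd p d) : LSd p d := fun i => lsopp (x i).

Definition tau (p d : nat) (x : LSd p d) : LSd p d := fun i => lsmulT (x i).

Definition powser_d (p d : nat) : vset p d :=
  fun x => forall (i : 'I_d) (n : int), n < 0 -> coef (x i) n = 0.

(* Topology: the sets x + (t^k F_p[[t]])^d, k : int, form a neighbourhood
   basis at x (this is the product of the usual locally compact topology). *)
Definition vopen (p d : nat) (U : vset p d) : Prop :=
  forall x, U x -> exists k : int, forall y : LSd p d,
    (forall (i : 'I_d) (n : int), n < k -> coef (y i) n = coef (x i) n) -> U y.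

Definition vcompact (p d : nat) (K : vset p d) : Prop :=
  forall (I : Type) (U : I -> vset p d), (forall i, vopen (U i)) ->
    (forall x, K x -> exists i, U i x) ->
    exists s : seq I, forall x, K x -> exists i, Stdlib.Lists.List.In i s /\ U i x.

Definition vsubgroup (p d : nat) (V : vset p d) : Prop :=
  V (@vzero p d) /\ (forall x y, V x -> V y -> V (vadd x y)) /\
  (forall x, V x -> V (vopp x)).

Definition vimage (p d : nat) (f : LSd p d -> LSd p d) (A : vset p d) : vset p d :=
  fun y => exists x, A x /\ f x = y.

Definition vcontinuous (p d : nat) (f : LSd p d -> LSd p d) : Prop :=
  forall U : vset p d, vopen U -> vopen (fun x => U (f x)).

Definition top_group_aut (p d : nat) (th : LSd p d -> LSd p d) : Prop :=
  (forall x y, th (vadd x y) = vadd (th x) (th y)) /\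
  exists th' : LSd p d -> LSd p d,
    (forall x, th' (th x) = x) /\ (forall y, th (th' y) = y) /\
    vcontinuous th /\ vcontinuous th'.

From mathcomp Require Import all_boot all_order all_algebra.
From mathcomp Require Import zify.
From Stdlib Require Import ProofIrrelevance FunctionalExtensionality Classical.
Set Implicit Arguments. Unset Strict Implicit. Unset Printing Implicit Defensive.
Import Order.TTheory GRing.Theory Num.Theory.
Local Open Scope ring_scope.

(* A compact open subgroup V of F_p((t))^d with t V <= V is an F_p[[t]]-lattice,
   and the theorem says it has a basis.  We find one by an elementary column
   reduction carried out with group-theoretic data only.

   Call W adapted to the first j coordinates if it is a compact open t-stable
   subgroup whose entries in the coordinates i < j are power series and which
   contains each line F_p[[t]] e_i, i < j.  Every such V is adapted to 0
   coordinates, and the only subgroup adapted to all d of them is F_p[[t]]^d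
   (adapted_full).  The key step (adapted_step): if W is adapted to j < d
   coordinates, let a be the least valuation of the j-th entry among the vectors
   of W whose first j entries vanish, and v such a vector with j-th entry t^a
   (tail_unit).  The shear x_j |-> t^a x_j, x_i |-> x_i + v_i x_j (i <> j), with
   v_i truncated to a Laurent polynomial, is a t-equivariant automorphism whose
   preimage of W is adapted to j + 1 coordinates.  Composing the d shears gives
   the automorphism of the theorem (adapted_reduce). *)

Lemma Fp_natr (p : nat) (c : 'F_p) : (c : nat)%:R = c.
Proof. exact: natr_Zp. Qed.

Lemma lsext (p : nat) (a b : LS p) : (forall n, coef a n = coef b n) -> a = b.
Proof.
case: a b => [fa ha] [fb hb] /= H.
have E : fa = fb by apply: functional_extensionality.
by subst; f_equal; apply: proof_irrelevance.
Qed.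

Lemma vext (p d : nat) (x y : LSd p d) :
  (forall i n, coef (x i) n = coef (y i) n) -> x = y.
Proof. by move=> H; apply: functional_extensionality => i; apply: lsext. Qed.

Lemma coef0 p n : coef (ls0 p) n = 0. Proof. by []. Qed.
Lemma coefD p (a b : LS p) n : coef (lsadd a b) n = coef a n + coef b n. Proof. by []. Qed.
Lemma coefN p (a : LS p) n : coef (lsopp a) n = - coef a n. Proof. by []. Qed.
Lemma coef_if p (b : bool) (u v : LS p) n :
  coef (if b then u else v) n = if b then coef u n else coef v n.
Proof. by case: b. Qed.

Lemma coefV0 p d i n : coef (@vzero p d i) n = 0. Proof. by []. Qed.
Lemma coefVD p d (x y : LSd p d) i n :
  coef (vadd x y i) n = coef (x i) n + coef (y i) n.
Proof. by []. Qed.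
Lemma coefVN p d (x : LSd p d) i n : coef (vopp x i) n = - coef (x i) n.
Proof. by []. Qed.
Lemma coefVT p d (x : LSd p d) i n : coef (tau x i) n = coef (x i) (n - 1).
Proof. by []. Qed.

Lemma coef_iter_tau p d m (x : LSd p d) i n :
  coef (iter m (@tau p d) x i) n = coef (x i) (n - m%:Z).
Proof.
elim: m n => [|m IH] n; first by rewrite /= subr0.
by rewrite iterS coefVT IH; congr (coef _ _); lia.
Qed.

Lemma laurent_shift p (a : LS p) (k : int) : laurent_pred (fun n => coef a (n - k)).
Proof. by case: a => a [N HN]; exists (N + k) => n /= hn; apply: HN; lia. Qed.
Definition shift p (k : int) (a : LS p) : LS p := exist _ _ (laurent_shift a k).
Lemma coefS p k (a : LS p) n : coef (shift k a) n = coef a (n - k). Proof. by []. Qed.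

Lemma shiftK p a (z : LS p) : shift (-a) (shift a z) = z.
Proof. by apply: lsext => n; rewrite !coefS; congr (coef z _); lia. Qed.
Lemma shiftKV p a (z : LS p) : shift a (shift (-a) z) = z.
Proof. by apply: lsext => n; rewrite !coefS; congr (coef z _); lia. Qed.

Lemma laurent_mono p (k : int) : laurent_pred (fun n : int => ((n == k)%:R : 'F_p)).
Proof. by exists k => n hn; have -> : (n == k) = false by lia. Qed.
Definition mono p k : LS p := exist _ _ (laurent_mono p k).
Lemma coefM p k n : coef (mono p k) n = (n == k)%:R. Proof. by []. Qed.

(* Multiplication by the Laurent polynomial sum_(lo <= m < lo + len) q m t^m,
   i.e. by the window [lo, lo + len) of the coefficient function q. *)
Lemma laurent_lpmul p (q : int -> 'F_p) (lo : int) (len : nat) (a : LS p) :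
  laurent_pred (fun n =>
    \sum_(m < len) q (lo + (m : nat)%:Z) * coef a (n - (lo + (m : nat)%:Z))).
Proof.
case: a => a [N HN]; exists (N + lo) => n /= hn.
by apply: big1 => m _; rewrite HN ?mulr0 //; lia.
Qed.
Definition lpmul p q lo len (a : LS p) : LS p := exist _ _ (laurent_lpmul q lo len a).
Lemma coefL p q lo len (a : LS p) n : coef (lpmul q lo len a) n =
  \sum_(m < len) q (lo + (m : nat)%:Z) * coef a (n - (lo + (m : nat)%:Z)).
Proof. by []. Qed.

Lemma coefL_one p q lo len n : coef (@lpmul p q lo len (mono p 0)) n =
  if (lo <= n) && (n < lo + (len : nat)%:Z) then q n else 0.
Proof.
have coef1 (m : 'I_len) : coef (mono p 0) (n - (lo + (m : nat)%:Z)) =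
    (n == lo + (m : nat)%:Z)%:R.
  by rewrite coefM; congr (_%:R); apply/eqP/eqP; lia.
rewrite coefL; under eq_bigr => m _ do rewrite coef1.
case: ifP => H; last first.
  by apply: big1 => m _; have hm := ltn_ord m; rewrite (_ : (_ == _) = false) ?mulr0 //; lia.
have hi : (absz (n - lo) < len)%N by lia.
rewrite (bigD1 (Ordinal hi)) //= (_ : (_ == _) = true) ?mulr1; last by lia.
rewrite big1 ?addr0; first by congr q; lia.
move=> m hne; rewrite (_ : (_ == _) = false) ?mulr0 //.
by apply/negP => /eqP E; move/negP: hne; apply; apply/eqP; apply: val_inj => /=; lia.
Qed.

Definition vput p d (i : 'I_d) (f : LS p) : LSd p d :=
  fun i' => if i' == i then f else ls0 p.
Definition evec p d (i : 'I_d) (b : int) : LSd p d := vput i (mono p b).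
Definition vsingle p d (x : LSd p d) (i0 : 'I_d) : LSd p d := vput i0 (x i0).
Definition vtrunc p d (j : nat) (x : LSd p d) : LSd p d :=
  fun i => if (i < j)%N then x i else ls0 p.
Definition vmuln p d (x : LSd p d) (m : nat) : LSd p d := iter m (vadd x) (@vzero p d).

Definition supported_on p d (i : 'I_d) (x : LSd p d) : Prop :=
  forall i', i' != i -> forall n, coef (x i') n = 0.

Lemma vput_at p d (i : 'I_d) (f : LS p) : vput i f i = f.
Proof. by rewrite /vput eqxx. Qed.

Lemma coef_vput p d (i : 'I_d) (f : LS p) i' n :
  coef (vput i f i') n = if i' == i then coef f n else 0.
Proof. by rewrite /vput; case: ifP. Qed.

Lemma coef_evec p d (i : 'I_d) b i' n :
  coef (@evec p d i b i') n = if i' == i then (n == b)%:R else 0.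
Proof. exact: coef_vput. Qed.

Lemma evec_tau p d (i : 'I_d) (b : nat) : @evec p d i b.+1%:Z = tau (@evec p d i b%:Z).
Proof.
apply: vext => i' n; rewrite coefVT !coef_evec; case: ifP => // _.
by congr (_%:R); apply/eqP/eqP; lia.
Qed.

Lemma coef_vsingle p d (y : LSd p d) i0 i n :
  coef (vsingle y i0 i) n = if i == i0 then coef (y i) n else 0.
Proof. by rewrite /vsingle coef_vput; case: eqP => // ->. Qed.

Lemma coef_vmuln p d (x : LSd p d) m i n : coef (vmuln x m i) n = coef (x i) n *+ m.
Proof.
elim: m => [|m IH]; first by rewrite mulr0n.
by rewrite /vmuln iterS -/(vmuln x m) coefVD IH mulrS.
Qed.

Lemma subgroup_muln p d (V : vset p d) x m : vsubgroup V -> V x -> V (vmuln x m).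
Proof. by move=> [h0 [hD _]] hx; elim: m => [|m IH] //; exact: hD hx IH. Qed.

Lemma iter_tau_stable p d (W : vset p d) : (forall x, W x -> W (tau x)) ->
  forall m x, W x -> W (iter m (@tau p d) x).
Proof. by move=> hW; elim=> [|m IH] x hx //=; apply/hW/IH. Qed.

Definition unif_cont p d (f : LSd p d -> LSd p d) := forall k : int, exists k' : int,
  forall x y, (forall i n, n < k' -> coef (x i) n = coef (y i) n) ->
  (forall i n, n < k -> coef (f x i) n = coef (f y i) n).

Lemma unif_cont_continuous p d (f : LSd p d -> LSd p d) : unif_cont f -> vcontinuous f.
Proof.
move=> hl U hU x hx; have [k hk] := hU _ hx; have [k' hk'] := hl k.
by exists k' => y hy; apply: hk => i n hn; exact: hk' hy i n hn.
Qed.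

Lemma aut_id p d : top_group_aut (fun x : LSd p d => x).
Proof. by split=> //; exists (fun x => x); do 3!split=> //; move=> U. Qed.

Lemma aut_comp p d (f g : LSd p d -> LSd p d) :
  top_group_aut f -> top_group_aut g -> top_group_aut (fun x => f (g x)).
Proof.
move=> [fD [f' [f1 [f2 [fc f'c]]]]] [gD [g' [g1 [g2 [gc g'c]]]]]; split.
  by move=> x y; rewrite gD fD.
exists (fun y => g' (f' y)); split; first by move=> x; rewrite f1 g1.
split; first by move=> y; rewrite g2 f2.
split=> U hU; first exact: (gc (fun x => U (f x)) (fc U hU)).
exact: (f'c (fun x => U (g' x)) (g'c U hU)).
Qed.

Lemma additive_zero p d (f : LSd p d -> LSd p d) :
  (forall x y, f (vadd x y) = vadd (f x) (f y)) -> f (@vzero p d) = @vzero p d.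
Proof.
move=> hD; have E : f (@vzero p d) = f (vadd (@vzero p d) (@vzero p d)).
  by congr f; apply: vext => i n; rewrite coefVD coefV0 addr0.
apply: vext => i n; have := congr1 (fun v => coef (v i) n) E.
rewrite hD coefVD => /(congr1 (fun c => c - coef (f (@vzero p d) i) n)).
by rewrite addrK subrr coefV0 => <-.
Qed.

Lemma additive_opp p d (f : LSd p d -> LSd p d) :
  (forall x y, f (vadd x y) = vadd (f x) (f y)) -> forall x, f (vopp x) = vopp (f x).
Proof.
move=> hD x; have E : f (vadd x (vopp x)) = @vzero p d.
  rewrite -(additive_zero hD); congr f; apply: vext => i n.
  by rewrite coefVD coefVN coefV0 subrr.
apply: vext => i n; have := congr1 (fun v => coef (v i) n) E.
by rewrite hD coefVD coefVN coefV0 => /eqP; rewrite addr_eq0 => /eqP ->; rewrite opprK.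
Qed.

Lemma preimage_subgroup p d (f : LSd p d -> LSd p d) (W : vset p d) :
  top_group_aut f -> (forall x, f (tau x) = tau (f x)) ->
  vsubgroup W -> vopen W -> vcompact W -> (forall x, W x -> W (tau x)) ->
  [/\ vsubgroup (fun x => W (f x)), vopen (fun x => W (f x)),
      vcompact (fun x => W (f x)) & (forall x, W (f x) -> W (f (tau x)))].
Proof.
move=> [fD [f' [f1 [f2 [fc f'c]]]]] fT [h0 [hD hN]] hO hC hT; split.
- split; first by rewrite additive_zero.
  split; first by move=> x y hx hy; rewrite fD; apply: hD.
  by move=> x hx; rewrite additive_opp //; apply: hN.
- exact: fc.
- move=> I U hU hcov.
  have [s hs] := hC I (fun i y => U i (f' y)) (fun i => f'c _ (hU i))
     (fun y hy => hcov (f' y) (ltac:(by rewrite f2))).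
  exists s => x hx; have [i [hi hi2]] := hs _ hx; exists i; split=> //.
  by rewrite f1 in hi2.
- by move=> x hx; rewrite fT; apply: hT.
Qed.

Definition shear p d (jo : 'I_d) (a : int) (q : 'I_d -> int -> 'F_p) (lo : int)
  (len : nat) (x : LSd p d) : LSd p d :=
  fun i => if i == jo then shift a (x jo) else lsadd (x i) (lpmul (q i) lo len (x jo)).
Definition unshear p d (jo : 'I_d) (a : int) (q : 'I_d -> int -> 'F_p) (lo : int)
  (len : nat) (y : LSd p d) : LSd p d :=
  fun i => if i == jo then shift (-a) (y jo)
           else lsadd (y i) (lsopp (lpmul (q i) lo len (shift (-a) (y jo)))).

Section Shear.
Variables (p d : nat) (jo : 'I_d) (a : int) (q : 'I_d -> int -> 'F_p).
Variables (lo : int) (len : nat).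
Local Notation sh := (@shear p d jo a q lo len).
Local Notation ush := (@unshear p d jo a q lo len).

Lemma shear_jo x : sh x jo = shift a (x jo).
Proof. by rewrite /shear eqxx. Qed.
Lemma shear_ne x i : i != jo -> sh x i = lsadd (x i) (lpmul (q i) lo len (x jo)).
Proof. by rewrite /shear => /negbTE ->. Qed.
Lemma unshear_jo x : ush x jo = shift (-a) (x jo).
Proof. by rewrite /unshear eqxx. Qed.
Lemma unshear_ne x i : i != jo ->
  ush x i = lsadd (x i) (lsopp (lpmul (q i) lo len (shift (-a) (x jo)))).
Proof. by rewrite /unshear => /negbTE ->. Qed.

Lemma unshearK x : ush (sh x) = x.
Proof.
apply: functional_extensionality => i; case: (eqVneq i jo) => [->|hne].
  by rewrite unshear_jo shear_jo shiftK.
by apply: lsext => n; rewrite unshear_ne // shear_jo shiftK coefD coefN shear_ne // coefD addrK.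
Qed.

Lemma shearK x : sh (ush x) = x.
Proof.
apply: functional_extensionality => i; case: (eqVneq i jo) => [->|hne].
  by rewrite shear_jo unshear_jo shiftKV.
by apply: lsext => n; rewrite shear_ne // unshear_jo unshear_ne // !coefD coefN subrK.
Qed.

Lemma shear_add x y : sh (vadd x y) = vadd (sh x) (sh y).
Proof.
apply: vext => i n; case: (eqVneq i jo) => [->|hne].
  by rewrite coefVD !shear_jo !coefS coefVD.
rewrite coefVD !shear_ne // !coefD !coefL addrACA -big_split /=.
by congr (_ + _); apply: eq_bigr => k _; rewrite -mulrDr.
Qed.

Lemma shear_tau x : sh (tau x) = tau (sh x).
Proof.
apply: vext => i n; case: (eqVneq i jo) => [->|hne].
  by rewrite coefVT !shear_jo !coefS coefVT; congr (coef _ _); lia.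
rewrite coefVT !shear_ne // !coefD !coefL coefVT; congr (_ + _); apply: eq_bigr => k _.
by rewrite coefVT; congr (_ * coef _ _); lia.
Qed.

Lemma shear_aut : top_group_aut sh.
Proof.
split; first exact: shear_add.
exists ush; split; first exact: unshearK.
split; first exact: shearK.
split; apply: unif_cont_continuous => k;
  exists (k + `|a|%:Z + `|lo|%:Z) => x y hxy i n hn;
  (case: (eqVneq i jo) => [->|hne];
    [by rewrite ?shear_jo ?unshear_jo !coefS hxy //; lia | ]).
- rewrite !shear_ne // !coefD !coefL hxy; last by lia.
  by congr (_ + _); apply: eq_bigr => m _; rewrite hxy //; lia.
- rewrite !unshear_ne // !coefD !coefN !coefL hxy; last by lia.
  by congr (_ - _); apply: eq_bigr => m _; rewrite !coefS hxy //; lia.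
Qed.

Lemma shear_fix x : (forall n, coef (x jo) n = 0) -> sh x = x.
Proof.
move=> hx; apply: vext => i n; case: (eqVneq i jo) => [->|h'].
  by rewrite shear_jo coefS !hx.
rewrite shear_ne // coefD coefL big1 ?addr0 //.
by move=> m _; rewrite hx mulr0.
Qed.

Lemma shear_coord_fix x i : i != jo -> (forall n, q i n = 0) ->
  forall n, coef (sh x i) n = coef (x i) n.
Proof.
move=> hne hq n; rewrite shear_ne // coefD coefL big1 ?addr0 //.
by move=> m _; rewrite hq mul0r.
Qed.

End Shear.

(* A compact set is bounded below in the t-adic sense: the sets of vectors whose
   coefficients vanish below -m form an increasing open cover. *)
Lemma vec_bound p d (x : LSd p d) :
  exists m : nat, forall i n, n < - (m%:Z) -> coef (x i) n = 0.
Proof.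
suff: forall s : seq 'I_d, exists m : nat,
    forall i, i \in s -> forall n, n < - (m%:Z) -> coef (x i) n = 0.
  by case/(_ (enum 'I_d)) => m hm; exists m => i; apply: hm; rewrite mem_enum.
elim=> [|i0 s [m hm]]; first by exists 0%N.
have [N HN] := proj2_sig (x i0).
exists (maxn m `|N|) => i; rewrite inE => /orP [/eqP -> | hi] n hn.
  by apply: HN; lia.
by apply: hm => //; lia.
Qed.

Lemma compact_bounded p d (W : vset p d) : vcompact W ->
  exists M : nat, forall x, W x -> forall i n, n < - (M%:Z) -> coef (x i) n = 0.
Proof.
move=> hC.
pose U (m : nat) : vset p d := fun y => forall i n, n < - (m%:Z) -> coef (y i) n = 0.
have hU : forall m, vopen (U m).
  by move=> m y hy; exists (- (m%:Z)) => z hz i n hn; rewrite hz //; exact: hy.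
have [s hs] := hC nat U hU (fun x _ => vec_bound x).
exists (foldr maxn 0%N s) => x hx; have [m [hm hxm]] := hs x hx.
have le : (m <= foldr maxn 0 s)%N.
  by elim: s hm {hs} => [|b s IH] //= [-> | /IH]; lia.
by move=> i n hn; apply: hxm; lia.
Qed.

Lemma open_nbhs0 p d (W : vset p d) : vopen W -> W (@vzero p d) ->
  exists k : int, forall y, (forall i n, n < k -> coef (y i) n = 0) -> W y.
Proof.
move=> hO h0; have [k hk] := hO _ h0; exists k => y hy; apply: hk => i n hn.
by rewrite hy.
Qed.

Lemma nat_min (P : nat -> Prop) : (exists n, P n) ->
  exists n, P n /\ forall m, P m -> (n <= m)%N.
Proof.
move=> [n hn]; elim/ltn_ind: n hn => n IH hn.
case: (classic (exists m, (m < n)%N /\ P m)) => [[m [hm hPm]] | hno].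
  exact: IH hm hPm.
exists n; split=> // m hPm; rewrite leqNgt; apply/negP => hmn; apply: hno.
by exists m.
Qed.

Lemma int_min (D : int -> Prop) (M : int) : (forall n, D n -> M <= n) ->
  (exists n, D n) -> exists a, D a /\ forall n, D n -> a <= n.
Proof.
move=> hb [n hn].
have e : forall k, D k -> (absz (k - M))%:Z + M = k.
  by move=> k hk; have := hb _ hk; lia.
have hn' : D ((absz (n - M))%:Z + M) by rewrite e.
have [m [hm hmin]] := @nat_min (fun m : nat => D (m%:Z + M)) (ex_intro _ _ hn').
exists (m%:Z + M); split => // k hk.
by have := hmin (absz (k - M)); rewrite (e _ hk) => /(_ hk); have := hb _ hk; lia.
Qed.

Lemma int_down_ind (R : int -> Prop) (lo K : int) : lo <= K -> R K ->
  (forall b, lo <= b -> R (b + 1) -> R b) -> R lo.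
Proof.
move=> hle hK hS.
suff H : forall c : nat, lo <= K - c%:Z -> R (K - c%:Z).
  have E : K - (absz (K - lo))%:Z = lo by lia.
  by rewrite -E; apply: H; rewrite E.
elim=> [|c IH] h; first by rewrite subr0.
apply: hS => //; have -> : K - c.+1%:Z + 1 = K - c%:Z by lia.
by apply: IH; lia.
Qed.

(* An open subgroup containing t^b e_i for all b >= 0 contains the whole line
   F_p[[t]] e_i: the coefficients of such a vector are cancelled one at a time,
   until what remains lies in the neighbourhood of 0 contained in U. *)
Lemma open_subgroup_line p d (U : vset p d) (i0 : 'I_d) :
  vsubgroup U -> vopen U -> (forall b : nat, U (evec p i0 b%:Z)) ->
  forall x, supported_on i0 x -> (forall n, n < 0 -> coef (x i0) n = 0) -> U x.
Proof.
move=> hU hO he; have [h0 [hD hN]] := hU; have [k hk] := open_nbhs0 hO h0.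
pose R b := forall x, supported_on i0 x ->
  (forall n, n < b -> coef (x i0) n = 0) -> U x.
apply: (@int_down_ind R 0 (Num.max k 0)); first by rewrite le_max lexx orbT.
  move=> y hs hz; apply: hk => i n hn; case: (eqVneq i i0) => [->|h'].
    by apply: hz; rewrite lt_max hn.
  exact: hs.
move=> b hb hR y hs hz.
pose h := vmuln (evec p i0 (absz b)%:Z) (coef (y i0) b).
have -> : y = vadd (vadd y (vopp h)) h.
  by apply: vext => i n; rewrite !coefVD coefVN addrNK.
apply: hD; last exact: subgroup_muln.
apply: hR.
  move=> i h' n; rewrite coefVD coefVN coef_vmuln coef_evec (negbTE h').
  by rewrite mul0rn oppr0 addr0 hs.
move=> n hn; rewrite coefVD coefVN coef_vmuln coef_evec eqxx.
case: (ltP n b) => hnb.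
  rewrite hz // (_ : (n == _) = false); last by lia.
  by rewrite mul0rn oppr0 addr0.
have -> : n = b by lia.
rewrite (_ : (b == _) = true); last by lia.
by rewrite -mulr_natl mulr1 Fp_natr subrr.
Qed.

Record adapted p d (j : nat) (W : vset p d) : Prop := Adapted {
  adapted_subgroup : vsubgroup W;
  adapted_open : vopen W;
  adapted_compact : vcompact W;
  adapted_tau : forall x, W x -> W (tau x);
  adapted_coords : forall x, W x -> forall i : 'I_d, (i < j)%N ->
    forall n, n < 0 -> coef (x i) n = 0;
  adapted_lines : forall x (i : 'I_d), (i < j)%N -> supported_on i x ->
    (forall n, n < 0 -> coef (x i) n = 0) -> W x }.

(* An adapted subgroup contains the vectors with power-series entries in its
   first j' <= j coordinates and zero entries elsewhere: they are sums of
   vectors from the lines F_p[[t]] e_i. *)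
Lemma adapted_trunc p d j (W : vset p d) (x : LSd p d) j' : adapted j W ->
  (j' <= j)%N -> (forall i : 'I_d, (i < j')%N -> forall n, n < 0 -> coef (x i) n = 0) ->
  W (vtrunc j' x).
Proof.
move=> hW; have [h0 [hD _]] := adapted_subgroup hW.
elim: j' => [|j' IH] hj' hx.
  by have -> : vtrunc 0 x = @vzero p d by apply: functional_extensionality.
have IHj : W (vtrunc j' x) by apply: IH => [|i hi]; [lia | apply: hx; lia].
case: (ltnP j' d) => hjd; last first.
  suff -> : vtrunc j'.+1 x = vtrunc j' x by [].
  apply: functional_extensionality => i; have hi := ltn_ord i.
  have [hi1 hi2] : (i < j'.+1)%N /\ (i < j')%N by lia.
  by rewrite /vtrunc hi1 hi2.
have hs : W (vsingle x (Ordinal hjd)).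
  apply: (adapted_lines hW (i := Ordinal hjd)) => //.
    by move=> i' hi' n; rewrite coef_vsingle (negbTE hi').
  by move=> n hn; rewrite coef_vsingle eqxx; apply: hx.
suff -> : vtrunc j'.+1 x = vadd (vtrunc j' x) (vsingle x (Ordinal hjd)) by apply: hD.
apply: vext => i n; rewrite coefVD coef_vsingle !coef_if coef0.
have -> : (i == Ordinal hjd) = (nat_of_ord i == j') by [].
by rewrite ltnS leq_eqVlt; case: ltngtP; rewrite ?addr0 ?add0r.
Qed.

Lemma adapted_full p d (W : vset p d) : adapted d W -> forall y, W y <-> powser_d y.
Proof.
move=> hW y; split=> [hy i | hy]; first exact: (adapted_coords hW hy (ltn_ord i)).
have -> : y = vtrunc d y by apply: functional_extensionality => i; rewrite /vtrunc ltn_ord.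
by apply: (adapted_trunc hW) => // i _; apply: hy.
Qed.

Section AdaptedStep.
Variables (p d j : nat) (W : vset p d).
Hypotheses (hjd : (j < d)%N) (hW : adapted j W).
Local Notation jo := (Ordinal hjd).

Lemma eq_jo (i : 'I_d) : (i == jo) = (nat_of_ord i == j).
Proof. by []. Qed.

Definition tail (x : LSd p d) : Prop :=
  W x /\ forall i : 'I_d, (i < j)%N -> forall n, coef (x i) n = 0.

Lemma tail_add x y : tail x -> tail y -> tail (vadd x y).
Proof.
move=> [hx zx] [hy zy]; split; first exact: (proj1 (proj2 (adapted_subgroup hW))).
by move=> i hi n; rewrite coefVD zx // zy // addr0.
Qed.

Lemma tail_muln x m : tail x -> tail (vmuln x m).
Proof.
move=> [hx zx]; split; first exact: (subgroup_muln _ (adapted_subgroup hW)).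
by move=> i hi n; rewrite coef_vmuln zx // mul0rn.
Qed.

Lemma tail_iter_tau x m : tail x -> tail (iter m (@tau p d) x).
Proof.
move=> [hx zx]; split; first exact: (iter_tau_stable (adapted_tau hW)).
by move=> i hi n; rewrite coef_iter_tau zx.
Qed.

Lemma tail_of_W y : W y -> tail (vadd y (vopp (vtrunc j y))).
Proof.
move=> hy; have [_ [hD hN]] := adapted_subgroup hW; split.
  apply: hD => //; apply: hN; apply: (adapted_trunc hW) => // i hi.
  exact: (adapted_coords hW hy).
by move=> i hi n; rewrite coefVD coefVN coef_if hi subrr.
Qed.

Lemma tail_nbhs : exists k : int,
  forall f : LS p, (forall n, n < k -> coef f n = 0) -> tail (vput jo f).
Proof.
have [k hk] := open_nbhs0 (adapted_open hW) (proj1 (adapted_subgroup hW)).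
exists k => f hf; split.
  by apply: hk => i n hn; rewrite coef_vput; case: ifP => // _; apply: hf.
by move=> i hi n; rewrite coef_vput eq_jo; case: eqP => // E; lia.
Qed.

Lemma tail_least_valuation : exists a : int,
  (exists x, tail x /\ coef (x jo) a != 0) /\
  (forall x, tail x -> forall n, n < a -> coef (x jo) n = 0).
Proof.
have [M hM] := compact_bounded (adapted_compact hW).
have [k hk] := tail_nbhs.
pose D (n : int) := exists x, tail x /\ coef (x jo) n != 0.
have Dbound : forall n, D n -> - (M%:Z) <= n.
  move=> n [x [[hx _] hne]]; rewrite leNgt; apply/negP => hlt.
  by rewrite hM in hne.
have Dk : D k.
  exists (evec p jo k); split; last by rewrite coef_evec !eqxx oner_neq0.
  by apply: hk => n hn; rewrite coefM (_ : (n == k) = false) //; lia.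
have [a [Da amin]] := int_min Dbound (ex_intro _ _ Dk).
exists a; split=> // x hx n hn; apply/eqP; apply: contraT => hne.
by have := amin n (ex_intro _ x (conj hx hne)); lia.
Qed.

(* Conversely every Laurent series of valuation >= a is the entry jo of a tail
   vector: descending from a neighbourhood of 0, each coefficient is cancelled
   by an F_p-multiple of a t-power shift of a vector of valuation exactly a. *)
Lemma tail_onto (a : int) :
  (exists x, tail x /\ coef (x jo) a != 0) ->
  (forall x, tail x -> forall n, n < a -> coef (x jo) n = 0) ->
  forall f : LS p, (forall n, n < a -> coef f n = 0) ->
  exists x, tail x /\ forall n, coef (x jo) n = coef f n.
Proof.
move=> [u [Tu cu]] amin.
have [k hk] := tail_nbhs.
pose Q (b : int) := forall f : LS p, (forall n, n < b -> coef f n = 0) ->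
  exists x, tail x /\ forall n, coef (x jo) n = coef f n.
apply: (@int_down_ind Q a (Num.max k a)); first by rewrite le_max lexx orbT.
  move=> f hf; exists (vput jo f); split; last by move=> n; rewrite vput_at.
  by apply: hk => n hn; apply: hf; rewrite lt_max hn.
move=> b hab hQ f hf.
pose s := coef f b / coef (u jo) a.
pose h := vmuln (iter (absz (b - a)) (@tau p d) u) s.
have Th : tail h by apply: tail_muln; apply: tail_iter_tau.
have ch n : coef (h jo) n = coef (u jo) (n - (absz (b - a))%:Z) *+ s.
  by rewrite coef_vmuln coef_iter_tau.
have hf' n : n < b + 1 -> coef (lsadd f (lsopp (h jo))) n = 0.
  move=> hn; rewrite coefD coefN ch.
  case: (ltP n b) => hnb.
    by rewrite hf // amin // ?mul0rn ?subr0 //; lia.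
  have -> : n = b by lia.
  have -> : b - (absz (b - a))%:Z = a by lia.
  by rewrite -mulr_natr Fp_natr /s mulrCA mulfV // mulr1 subrr.
have [x' [Tx' hx']] := hQ _ hf'.
exists (vadd x' h); split; first exact: tail_add.
by move=> n; rewrite coefVD hx' coefD coefN subrK.
Qed.

Lemma tail_unit : exists (a : int) (v : LSd p d),
  [/\ tail v, forall n, coef (v jo) n = coef (mono p a) n &
      forall x, tail x -> forall n, n < a -> coef (x jo) n = 0].
Proof.
have [a [ha amin]] := tail_least_valuation.
have [v [Tv hv]] := tail_onto ha amin (f := mono p a)
  (fun n hn => (ltac:(by rewrite coefM (_ : (n == a) = false) //; lia))).
by exists a, v; split.
Qed.

(* The shear built from v: x_jo is multiplied by t^a and v_i x_jo (truncated to
   the window where v_i can be nonzero mod (t^k F_p[[t]])) is added to x_i. *)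
Section Theta.
Variables (a : int) (v : LSd p d) (M : nat) (k : int).
Hypotheses (hv : tail v) (hva : forall n, coef (v jo) n = coef (mono p a) n).
Hypothesis amin : forall x, tail x -> forall n, n < a -> coef (x jo) n = 0.
Hypothesis hM : forall x, W x -> forall i n, n < - (M%:Z) -> coef (x i) n = 0.
Hypothesis hk : forall y, (forall i n, n < k -> coef (y i) n = 0) -> W y.

Local Notation theta :=
  (shear jo a (fun i n => coef (v i) n) (- (M%:Z)) (absz (k + M%:Z))).

(* theta(e_jo) agrees with v up to t^k, hence lies in W. *)
Lemma theta_evec0 : W (theta (evec p jo 0)).
Proof.
have [_ [hD hN]] := adapted_subgroup hW.
pose dv := vadd v (vopp (theta (evec p jo 0))).
have Wd : W dv.
  apply: hk => i n hn; rewrite coefVD coefVN.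
  case: (eqVneq i jo) => [->|hne].
    by rewrite shear_jo coefS coef_evec eqxx hva coefM subr_eq0 subrr.
  rewrite shear_ne // coefD coef_evec (negbTE hne) add0r /evec vput_at coefL_one.
  case: ifP => hw; first by rewrite subrr.
  by rewrite hM ?subr0 //; [case: hv | lia].
have -> : theta (evec p jo 0) = vadd v (vopp dv).
  by apply: vext => i n; rewrite !coefVD !coefVN opprD opprK addrA subrr add0r.
by apply: hD; [case: hv | apply: hN].
Qed.

Lemma theta_evec (b : nat) : W (theta (evec p jo b%:Z)).
Proof.
elim: b => [|b IH]; first exact: theta_evec0.
by rewrite evec_tau shear_tau; apply: (adapted_tau hW).
Qed.

Lemma theta_adapted : adapted j.+1 (fun x => W (theta x)).
Proof.
have [sS sO sC sT] := preimage_subgroup (shear_aut jo a (fun i n => coef (v i) n)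
  (- (M%:Z)) (absz (k + M%:Z))) (shear_tau _ _ _ _ _)
  (adapted_subgroup hW) (adapted_open hW) (adapted_compact hW) (adapted_tau hW).
split=> // [x hx i | x i].
- rewrite ltnS leq_eqVlt => /orP [/eqP hij | hij] n hn.
    have -> : i = jo by apply: val_inj.
    have := amin (tail_of_W hx) (n := n + a) (ltac:(lia)).
    by rewrite coefVD coefVN /vtrunc /= ltnn coef0 subr0 shear_jo coefS addrK.
  have hne : i != jo by rewrite eq_jo; apply/eqP; lia.
  have hq n' : coef (v i) n' = 0 by apply: (proj2 hv).
  rewrite -(@shear_coord_fix p d jo a (fun i n => coef (v i) n) (- (M%:Z)) (absz (k + M%:Z)) x i hne hq).
  exact: (adapted_coords hW hx).
- rewrite ltnS leq_eqVlt => /orP [/eqP hij | hij] hs h0.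
    have ij : i = jo by apply: val_inj.
    by subst i; apply: (open_subgroup_line (U := fun y => W (theta y)) sS sO theta_evec).
  have hne : jo != i by rewrite eq_sym eq_jo; apply/eqP; lia.
  rewrite shear_fix; first exact: (adapted_lines hW hij hs).
  exact: hs.
Qed.

End Theta.

Lemma adapted_step : exists f : LSd p d -> LSd p d,
  [/\ top_group_aut f, forall x, f (tau x) = tau (f x) & adapted j.+1 (fun x => W (f x))].
Proof.
have [a [v [hv hva amin]]] := tail_unit.
have [M hM] := compact_bounded (adapted_compact hW).
have [k hk] := open_nbhs0 (adapted_open hW) (proj1 (adapted_subgroup hW)).
exists (shear jo a (fun i n => coef (v i) n) (- (M%:Z)) (absz (k + M%:Z))); split; [exact: shear_aut | exact: shear_tau |].
exact: theta_adapted.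
Qed.

End AdaptedStep.

Lemma image_pullback p d (f th : LSd p d -> LSd p d) (P W : vset p d) :
  top_group_aut f -> (forall y, vimage th P y <-> W (f y)) ->
  forall y, vimage (fun x => f (th x)) P y <-> W y.
Proof.
move=> [_ [f' [f1 [f2 _]]]] hth y; split.
  by case=> x [hx <-]; apply/hth; exists x.
move=> hy; have [x [hx hxe]] : vimage th P (f' y) by apply/hth; rewrite f2.
by exists x; split=> //; rewrite hxe f2.
Qed.

Lemma adapted_reduce p d : forall n j (W : vset p d), (j + n = d)%N -> adapted j W ->
  exists th : LSd p d -> LSd p d, [/\ top_group_aut th, forall x, th (tau x) = tau (th x)
    & forall y, vimage th (@powser_d p d) y <-> W y].
Proof.
elim=> [|n IH] j W hjn hW.
  rewrite addn0 in hjn; subst j.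
  exists (fun x => x); split=> // [|y]; first exact: aut_id.
  split=> [[x [hx <-]] | hy]; first exact/(adapted_full hW).
  by exists y; split=> //; apply/(adapted_full hW).
have hjd : (j < d)%N by lia.
have [f [fA fT hW']] := adapted_step hjd hW.
have [th [thA thT thW]] := IH j.+1 _ (ltac:(lia)) hW'.
exists (fun x => f (th x)); split; first exact: aut_comp.
  by move=> x; rewrite thT fT.
exact: image_pullback.
Qed.

Theorem mainTheorem10 (p d : nat) (hp : prime p) (V : vset p d) :
  vsubgroup V -> vopen V -> vcompact V ->
  (forall x, vimage (@tau p d) V x -> V x) ->
  ~ (forall x, V x -> vimage (@tau p d) V x) ->
  exists th : LSd p d -> LSd p d,
    top_group_aut th /\
    (forall x, th (tau x) = tau (th x)) /\
    (forall y, vimage th (@powser_d p d) y <-> V y).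
Proof.
move=> hS hO hC hT _.
have hV : adapted 0 V.
  by split=> // x hx; apply: hT; exists x.
have [th [thA thT thV]] := adapted_reduce (n := d) (erefl : (0 + d)%N = d) hV.
by exists th.
Qed.
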